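(* Let $m\ge1$ and $0\le r\le m(q-1)$, written $r=t(q-1)+s$ with $t\ge0$, $0\le s<q-1$, and let $1\le b\le q^m$. Then $RM_q(r,m)$ is a $b$-symbol MDS code if and only if either (a) $b\ge q^m-(q-s)q^{m-t-1}+1$, or (b) $RM_q(r,m)$ is a $1$-symbol MDS code (i.e., MDS in the Hamming metric).
   Context: Fix an enumeration $\mathbb{F}_q=\{\alpha_1=0,\alpha_2,\dots,\alpha_q\}$, order $\mathbb{F}_q$ by $\alpha_1<\dots<\alpha_q$, and order $\mathbb{F}_q^m$ lexicographically as $P_1<\dots<P_{q^m}$. $RM_q(r,m)=\{(f(P_1),\dots,f(P_{q^m})) : f\in\mathbb{F}_q[X_1,\dots,X_m],\ \deg f\le r\}$. For $\mathbf{x}\in\mathbb{F}_q^L$, $\chi_b(\mathbf{x})=\{i:(x_i,\dots,x_{i+b-1})\ne\mathbf{0}\}$ (indices mod $L$), $w_b(\mathbf{x})=|\chi_b(\mathbf{x})|$, $d_b(C)=\min_{\mathbf{0}\ne\mathbf{c}\in C}w_b(\mathbf{c})$. An $[n,k]_q$-linear code $C$ is a $b$-symbol MDS code if $d_b(C)=\min\{n-k+b,n\}$. *)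

From HB Require Import structures.
From mathcomp Require Import all_boot all_order all_algebra all_field.
From mathcomp Require Import mpoly.
From Stdlib Require Import ClassicalEpsilon.

Set Implicit Arguments.
Unset Strict Implicit.
Unset Printing Implicit Defensive.

Import GRing.Theory.
Local Open Scope ring_scope.

Definition pbool (P : Prop) : bool :=
  if excluded_middle_informative P then true else false.

Section Defs.
Variable F : finFieldType.

Lemma card_F_gt0 : (0 < #|F|)%N.
Proof. by apply/card_gt0P; exists 0. Qed.

Definition digit (m j : nat) (l : 'I_m) : 'I_#|F| :=
  Ordinal (ltn_pmod (j %/ #|F| ^ (m - 1 - l)) card_F_gt0).

(* alpha : enumeration of F_q, alpha_(i+1) = alpha i (0-indexed).
   The 0-indexed point P_(j+1) of F_q^m in lexicographic order. *)
Definition RMpoint (alpha : 'I_#|F| -> F) (m j : nat) : 'I_m -> F :=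
  fun l => alpha (@digit m j l).

Definition evalvec (alpha : 'I_#|F| -> F) (m : nat) (p : {mpoly F[m]})
  : 'rV[F]_(#|F| ^ m) :=
  \row_(j < #|F| ^ m) p.@[@RMpoint alpha m j].

(* c is a codeword of RM_q(r,m): c = evalvec f with deg f <= r
   (msize p = 1 + total degree, 0 for p = 0). *)
Definition inRM (alpha : 'I_#|F| -> F) (r m : nat) (c : 'rV[F]_(#|F| ^ m)) : Prop :=
  exists p : {mpoly F[m]}, (msize p <= r.+1)%N /\ c = @evalvec alpha m p.

Definition RM (alpha : 'I_#|F| -> F) (r m : nat) : {set 'rV[F]_(#|F| ^ m)} :=
  [set c | pbool (@inRM alpha r m c)].

(* b-symbol support: i such that (x_i, ..., x_{i+b-1}) (indices mod n) is nonzero,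
   i.e. some j with (j - i) mod n < b and x_j != 0. *)
Definition chi_b (n b : nat) (x : 'rV[F]_n) : {set 'I_n} :=
  [set i : 'I_n | [exists j : 'I_n, (((j + n - i) %% n < b)%N) && (x 0 j != 0)]].

Definition w_b (n b : nat) (x : 'rV[F]_n) : nat := #|chi_b b x|.

Definition is_db (n b : nat) (C : {set 'rV[F]_n}) (d : nat) : Prop :=
  (exists2 c, c \in C & (c != 0) /\ w_b b c = d) /\
  (forall c, c \in C -> c != 0 -> (d <= w_b b c)%N).

Definition code_dim (n : nat) (C : {set 'rV[F]_n}) : nat := \dim <<enum C>>%VS.

Definition bsymbol_MDS (n b : nat) (C : {set 'rV[F]_n}) : Prop :=
  is_db b C (minn (n - code_dim C + b) n).

End Defs.

(* Write n = q^m, k = dim RM_q(r,m) and D = (q - s) q^(m-t-1), the minimum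
   distance of RM_q(r,m). A nonzero word of Hamming weight w has b-symbol weight
   at least min(n, w + b - 1): while not every window is hit, the set of hit
   windows has a boundary point, so passing from b to b + 1 hits a new window.
   A word supported on the first w positions has b-symbol weight at most
   w + b - 1. Every nonzero codeword has weight at least D (induction on m,
   slicing along the first variable), and a codeword supported exactly on the
   lexicographically first D points exists. With the Singleton bound
   D <= n - k + 1, the b-symbol distance is n when b + D > n and D + b - 1
   otherwise, and the latter equals min(n - k + b, n) iff D = n - k + 1, i.e.
   iff the code is MDS. *)

From HB Require Import structures.
From mathcomp Require Import all_boot all_order all_algebra all_field.
From mathcomp Require Import mpoly.
From mathcomp Require Import zify.
From Stdlib Require Import ClassicalEpsilon.

Set Implicit Arguments.
Unset Strict Implicit.
Unset Printing Implicit Defensive.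

Import GRing.Theory Num.Theory.
Local Open Scope ring_scope.

Lemma cyclic_offsetE n (i j : 'I_n) :
  ((j + n - i) %% n = if (i <= j)%N then j - i else j + n - i)%N.
Proof.
have := ltn_ord i; have := ltn_ord j; case: (leqP i j) => *.
  rewrite (_ : j + n - i = (j - i) + n)%N; last by lia.
  by rewrite modnDr modn_small //; lia.
by rewrite modn_small //; lia.
Qed.

Lemma val_iter_ordS n k (i : 'I_n) : val (iter k (@ordS n) i) = ((i + k) %% n)%N.
Proof.
elim: k => [|k IH] /=; first by rewrite addn0 modn_small.
by rewrite IH -addn1 modnDml addn1 addnS.
Qed.

Lemma ordS_boundary n (A : {set 'I_n}) :
  A != set0 -> A != setT -> exists i, (i \notin A) && (ordS i \in A).
Proof.
move=> /set0Pn[a Aa] AnT; apply/existsP; apply: contraR AnT => /existsPn closedA.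
have iterA k i : iter k (@ordS n) i \in A -> i \in A.
  elim: k i => [|k IH] i //; rewrite iterSr => /IH.
  by have := closedA i; rewrite negb_and negbK => /orP[] // /negbTE ->.
apply/eqP/setP => i; rewrite inE; apply: (iterA (a + n - i)%N).
suff -> : iter (a + n - i) (@ordS n) i = a by [].
apply/val_inj; rewrite val_iter_ordS.
have := ltn_ord i; have := ltn_ord a => ha hi.
rewrite (_ : i + (a + n - i) = a + n)%N; last by lia.
by rewrite modnDr modn_small.
Qed.

Lemma leq_card_seq n (A : {set 'I_n}) (s : seq nat) :
  {subset [seq val i | i in A] <= s} -> (#|A| <= size s)%N.
Proof.
move=> sAs; rewrite cardE -(size_map val).
by apply: uniq_leq_size; rewrite ?(map_inj_uniq val_inj) ?enum_uniq.
Qed.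

Lemma card_ord_ltn n w : (#|[set i : 'I_n | (i < w)%N]| <= w)%N.
Proof.
rewrite -[X in (_ <= X)%N](size_iota 0); apply: leq_card_seq => k /mapP[i].
by rewrite mem_enum inE mem_iota => ? ->.
Qed.

Lemma card_ord_geq n w : (#|[set i : 'I_n | n - w <= i]| <= w)%N.
Proof.
rewrite -[X in (_ <= X)%N](size_iota (n - w)); apply: leq_card_seq => k /mapP[i].
by rewrite mem_enum inE mem_iota => hi -> /=; have := ltn_ord i; lia.
Qed.

Lemma row_neq0P (R : nmodType) n (x : 'rV[R]_n) : reflect (exists j, x 0 j != 0) (x != 0).
Proof.
apply: (iffP idP) => [|[j]]; last by apply: contraNneq => ->; rewrite mxE.
move=> x0; apply/existsP; apply: contraR x0 => /existsPn x0.
by apply/eqP/rowP => j; rewrite mxE; apply/eqP; rewrite -[_ == _]negbK x0.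
Qed.

Lemma card_set_pair (T1 T2 : finType) (P : T1 -> T2 -> bool) :
  #|[set z : T1 * T2 | P z.1 z.2]| = (\sum_y #|[set a | P a y]|)%N.
Proof.
rewrite -sum1_card (eq_bigl (fun z : T1 * T2 => xpredT z.1 && P z.1 z.2)); last first.
  by move=> z; rewrite inE.
rewrite -(pair_big_dep xpredT P (fun _ _ => 1%N)) (exchange_big_dep xpredT) //=.
by apply: eq_bigr => y _; rewrite -sum1_card; apply: eq_bigl => a; rewrite inE.
Qed.

Lemma card_nonroot_ge (F : finFieldType) (P : {poly F}) :
  P != 0 -> (#|F| - (size P).-1 <= #|[set a | ~~ root P a]|)%N.
Proof.
move=> P0; have roots : (#|[set a | root P a]| < size P)%N.
  rewrite cardE; apply: max_poly_roots; rewrite ?enum_uniq //.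
  by apply/allP => a; rewrite mem_enum inE.
rewrite (_ : [set a | ~~ root P a] = ~: [set a | root P a]); last by apply/setP => a; rewrite !inE.
by rewrite -(cardsC [set a | root P a]); lia.
Qed.

Lemma pboolP (P : Prop) : reflect P (pbool P).
Proof. by rewrite /pbool; case: excluded_middle_informative => h; constructor. Qed.

Lemma msizeM_leq (R : idomainType) n (p1 p2 : {mpoly R[n]}) d1 d2 :
  (msize p1 <= d1.+1)%N -> (msize p2 <= d2.+1)%N -> (msize (p1 * p2) <= (d1 + d2).+1)%N.
Proof.
have [->|p1_0] := eqVneq p1 0; first by rewrite mul0r msize0.
have [->|p2_0] := eqVneq p2 0; first by rewrite mulr0 msize0.
by rewrite msizeM //; lia.
Qed.

Lemma msize_prod_leq (R : idomainType) n (I : Type) (s : seq I) (P : pred I)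
    (G : I -> {mpoly R[n]}) (d : I -> nat) :
  (forall i, P i -> (msize (G i) <= (d i).+1)%N) ->
  (msize (\prod_(i <- s | P i) G i) <= (\sum_(i <- s | P i) d i).+1)%N.
Proof.
move=> Gd; elim: s => [|i s IH]; first by rewrite !big_nil msize1.
by rewrite !big_cons; case: ifP => // Pi; apply: msizeM_leq (Gd i Pi) IH.
Qed.

Lemma msize_linear (R : idomainType) n (l : 'I_n) (c : R) :
  (msize ('X_l - c%:MP : {mpoly R[n]}) <= 2)%N.
Proof.
apply: leq_trans (msizeD_le _ _) _.
by rewrite msizeN msizeX mdeg1 msizeC geq_max; case: (c != 0).
Qed.

Lemma msize_1subX (R : idomainType) n (l : 'I_n) k :
  (msize (1 - 'X_l ^+ k : {mpoly R[n]}) <= k.+1)%N.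
Proof.
apply: leq_trans (msizeD_le _ _) _; rewrite msizeN msize1 geq_max /=.
by rewrite mpolyXn msizeX mdegMn mdeg1 mul1n.
Qed.

Section BSymbolWeight.
Variables (F : finFieldType) (n : nat).
Implicit Types (x : 'rV[F]_n) (b : nat).

Lemma chi_b1 x : chi_b 1 x = [set j | x 0 j != 0].
Proof.
apply/setP => i; rewrite !inE; apply/existsP/idP => [[j /andP[]]|xi].
  rewrite cyclic_offsetE => ji xj; suff -> : i = j by [].
  by apply/val_inj => /=; have := ltn_ord i; have := ltn_ord j; move: ji; case: ifP; lia.
by exists i; rewrite xi andbT cyclic_offsetE leqnn; lia.
Qed.

Lemma w_b1_gt0 x : x != 0 -> (0 < w_b 1 x)%N.
Proof.
by case/row_neq0P=> j xj; rewrite /w_b chi_b1 card_gt0; apply/set0Pn; exists j; rewrite inE.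
Qed.

Lemma chi_b_subset b b' x : (b <= b')%N -> chi_b b x \subset chi_b b' x.
Proof.
move=> bb'; apply/subsetP => i; rewrite !inE => /existsP[j /andP[ji xj]].
by apply/existsP; exists j; rewrite xj andbT; lia.
Qed.

Lemma chi_b_ordS b x i : ordS i \in chi_b b x -> i \in chi_b b.+1 x.
Proof.
rewrite !inE => /existsP[j /andP[]]; rewrite !cyclic_offsetE /= => ji xj.
apply/existsP; exists j; rewrite xj andbT cyclic_offsetE.
have := ltn_ord i; have := ltn_ord j => hj hi.
have [i1n|ni1] := ltnP i.+1 n.
  by move: ji; rewrite modn_small //; case: (leqP i.+1 j); case: (leqP i j); lia.
by move: ji; rewrite (_ : i.+1 = n) ?modnn //=; case: (leqP i j); lia.
Qed.

Lemma w_b_le_n b x : (w_b b x <= n)%N.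
Proof. by rewrite /w_b; apply: leq_trans (max_card _) _; rewrite card_ord. Qed.

Lemma w_b_ge b x : x != 0 -> (0 < b)%N -> (minn n (w_b 1 x + b - 1) <= w_b b x)%N.
Proof.
move=> x0; case: b => [//|b] _; elim: b => [|b IH]; first by rewrite addn1 subn1 geq_minr.
have [chiT|chiNT] := eqVneq (chi_b b.+1 x) setT.
  have := subset_leq_card (chi_b_subset x (leqnSn b.+1)).
  by rewrite chiT cardsT card_ord -/(w_b _ _); lia.
have chi0 : chi_b b.+1 x != set0.
  apply: contraTneq (w_b1_gt0 x0) => chi0; rewrite -leqNgt.
  by have := subset_leq_card (chi_b_subset x (ltn0Sn b)); rewrite chi0 cards0.
have [i /andP[iN iS]] := ordS_boundary chi0 chiNT.
have sub : i |: chi_b b.+1 x \subset chi_b b.+2 x.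
  by rewrite subUset sub1set chi_b_ordS ?chi_b_subset.
by move: (subset_leq_card sub); rewrite cardsU1 iN /= -!/(w_b _ _); lia.
Qed.

Lemma w_b_le_prefix b w x : (0 < b)%N -> (forall j : 'I_n, (w <= j)%N -> x 0 j = 0) ->
  (w_b b x <= w + b - 1)%N.
Proof.
move=> b0 xw.
have sub : chi_b b x \subset [set i : 'I_n | (i < w)%N] :|: [set i : 'I_n | (n - b.-1 <= i)%N].
  apply/subsetP => i; rewrite !inE => /existsP[j /andP[ji xj]].
  have jw : (j < w)%N by rewrite ltnNge; apply: contraNN xj => /xw ->.
  move: ji; rewrite cyclic_offsetE; have := ltn_ord i; have := ltn_ord j.
  by case: (leqP i j) => *; apply/orP; lia.
apply: leq_trans (subset_leq_card sub) _; apply: leq_trans (leq_card_setU _ _) _.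
by apply: leq_trans (leq_add (card_ord_ltn n w) (card_ord_geq n b.-1)) _; lia.
Qed.

End BSymbolWeight.

Section LinearCode.
Variables (F : finFieldType) (n : nat) (C : {set 'rV[F]_n}).
Hypothesis C_span : forall v, v \in <<enum C>>%VS -> v \in C.
Local Notation k := (code_dim C).

Lemma code_dim_le : (k <= n)%N.
Proof. by apply: leq_trans (dimvS (subvf _)) _; rewrite dimvf /dim /= mul1n. Qed.

Lemma code_dim_gt0 c : c \in C -> c != 0 -> (0 < k)%N.
Proof.
move=> cC; rewrite lt0n /code_dim dimv_eq0; apply: contraNneq => C0.
have : c \in <<enum C>>%VS by apply: memv_span; rewrite mem_enum.
by rewrite C0 memv0.
Qed.

(* The projection onto the last k - 1 positions has a nontrivial kernel on the code. *)
Lemma exists_word_vanishing_tail : (0 < k)%N ->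
  exists c, [/\ c \in C, c != 0 & forall j : 'I_n, (n - k < j)%N -> c 0 j = 0].
Proof.
move=> k0; have n0 : (0 < n)%N by have := code_dim_le; lia.
pose U := <<enum C>>%VS.
pose idx (i : 'I_k.-1) : 'I_n := insubd (Ordinal n0) (n - k + 1 + i)%N.
pose M : 'M[F]_(n, k.-1) := \matrix_(j, i) (j == idx i)%:R.
pose f : 'Hom('rV[F]_n, 'rV[F]_k.-1) := linfun (mulmxr M).
have dim_img : (\dim (f @: U) <= k.-1)%N.
  by apply: leq_trans (dimvS (subvf _)) _; rewrite dimvf /dim /= mul1n.
have ker_nz : (U :&: lker f)%VS != 0%VS.
  by rewrite -dimv_eq0; have := limg_ker_dim f U; rewrite -/(code_dim C); lia.
have := memv_pick (U :&: lker f)%VS; rewrite memv_cap => /andP[vU vker].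
exists (vpick (U :&: lker f)%VS); split; [exact: C_span | by rewrite vpick0 |].
move=> j jtail; have jk : (j - (n - k + 1) < k.-1)%N by have := ltn_ord j; lia.
have idx_j : idx (Ordinal jk) = j.
  by apply/val_inj; rewrite val_insubd /=; have := ltn_ord j; case: ifP; lia.
move: vker; rewrite memv_ker lfunE /= => /eqP /rowP /(_ (Ordinal jk)).
rewrite !mxE (bigD1 (idx (Ordinal jk))) //= mxE eqxx mulr1 big1 ?addr0 ?idx_j //.
by move=> j' /negbTE j'j; rewrite mxE idx_j j'j mulr0.
Qed.

Lemma min_wt_le_singleton D : (forall c, c \in C -> c != 0 -> (D <= w_b 1 c)%N) ->
  (0 < k)%N -> (D <= n - k + 1)%N.
Proof.
move=> min_wt /exists_word_vanishing_tail[c [cC c0 ctail]].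
have := min_wt c cC c0; have := w_b_le_prefix (w := (n - k).+1) (ltn0Sn 0) ctail.
by lia.
Qed.

Lemma MDS_bsymbol_MDS b : (0 < b)%N -> bsymbol_MDS 1 C -> bsymbol_MDS b C.
Proof.
move=> b0 [[c0 c0C [c0_nz _]] min_wt].
have k0 := code_dim_gt0 c0C c0_nz; have kn := code_dim_le.
have [c [cC c_nz ctail]] := exists_word_vanishing_tail k0.
have wt_ge d : d \in C -> d != 0 -> (minn (n - k + b) n <= w_b b d)%N.
  by move=> dC d0; have := w_b_ge d0 b0; have := min_wt d dC d0; lia.
split=> //; exists c => //; split=> //; apply/eqP; rewrite eqn_leq wt_ge // andbT.
by have := w_b_le_n b c; have := w_b_le_prefix (w := (n - k).+1) b0 ctail; lia.
Qed.

Section KnownMinimumWeight.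
Variables (D : nat) (c0 : 'rV[F]_n).
Hypothesis min_wt : forall c, c \in C -> c != 0 -> (D <= w_b 1 c)%N.
Hypotheses (c0C : c0 \in C) (c0_nz : c0 != 0).
Hypothesis c0_prefix : forall j : 'I_n, (D <= j)%N -> c0 0 j = 0.

Lemma bsymbol_MDS_wide b : (0 < b)%N -> (n < b + D)%N -> bsymbol_MDS b C.
Proof.
move=> b0 bD; have k0 := code_dim_gt0 c0C c0_nz.
have Dk := min_wt_le_singleton min_wt k0.
have wt_n c : c \in C -> c != 0 -> w_b b c = n.
  move=> cC c_nz; apply/eqP; rewrite eqn_leq w_b_le_n /=.
  by have := w_b_ge c_nz b0; have := min_wt cC c_nz; lia.
rewrite /bsymbol_MDS (_ : minn _ _ = n); last by lia.
split=> [|c cC c_nz]; last by rewrite wt_n.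
by exists c0 => //; rewrite wt_n.
Qed.

Lemma bsymbol_MDS_narrow b : (0 < b)%N -> (b + D <= n)%N ->
  bsymbol_MDS b C -> bsymbol_MDS 1 C.
Proof.
move=> b0 bD [_ min_wt_b]; have k0 := code_dim_gt0 c0C c0_nz.
have Dk := min_wt_le_singleton min_wt k0.
have := min_wt_b c0 c0C c0_nz; have := w_b_le_prefix b0 c0_prefix => c0_le c0_ge.
rewrite /bsymbol_MDS (_ : minn _ _ = D); last by have := code_dim_le; lia.
split=> //; exists c0 => //; split=> //; apply/eqP; rewrite eqn_leq min_wt // andbT.
by have := w_b_le_prefix (ltn0Sn 0) c0_prefix; rewrite addnK.
Qed.

Lemma bsymbol_MDS_iff b : (0 < b)%N ->
  bsymbol_MDS b C <-> (n < b + D)%N \/ bsymbol_MDS 1 C.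
Proof.
move=> b0; split=> [MDSb|[bD|/(MDS_bsymbol_MDS b0)] //].
  have [bD|bD] := ltnP n (b + D); first by left.
  by right; apply: bsymbol_MDS_narrow MDSb => //; lia.
by apply: bsymbol_MDS_wide => //; lia.
Qed.

End KnownMinimumWeight.
End LinearCode.

Section Digits.
Local Open Scope nat_scope.
Variable q : nat.
Hypothesis q_gt1 : (1 < q).

Definition digitn (m j l : nat) : nat := (j %/ q ^ (m - 1 - l)) %% q.

Lemma expq_gt0 e : (0 < q ^ e).
Proof. by rewrite expn_gt0; lia. Qed.

Lemma digitn_inj m j j' : (j < q ^ m) -> (j' < q ^ m) ->
  (forall l, (l < m) -> digitn m j l = digitn m j' l) -> j = j'.
Proof.
move=> jm j'm eq_dig.
suff eq_div k : (k <= m) -> j %/ q ^ (m - k) = j' %/ q ^ (m - k).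
  by have := eq_div m (leqnn m); rewrite subnn expn0 !divn1.
elim: k => [|k IH] km; first by rewrite subn0 !divn_small.
have e : (m - k = (m - k.+1).+1) by lia.
rewrite (divn_eq (j %/ q ^ (m - k.+1)) q) (divn_eq (j' %/ q ^ (m - k.+1)) q).
rewrite -!divnMA -expnSr -e IH; last by lia.
by have := eq_dig k km; rewrite /digitn (_ : m - 1 - k = m - k.+1); [move->|lia].
Qed.

Lemma digitn_prefix0 m t j : (t <= m) -> (j < q ^ m) ->
  (forall l, (l < t) -> digitn m j l = 0) <-> (j < q ^ (m - t)).
Proof.
move=> + jm; elim: t => [|t IH] tm; first by rewrite subn0.
have e : (m - t = (m - t.+1).+1) by lia.
split=> [dig0|jt l lt].
  have lt_q : j %/ q ^ (m - t.+1) < q.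
    rewrite ltn_divLR ?expq_gt0 // -expnS -e.
    by apply/(IH (ltnW tm)) => l lt; apply: dig0; lia.
  have := dig0 t (ltnSn t); rewrite /digitn (_ : m - 1 - t = m - t.+1); last by lia.
  rewrite modn_small // => div0.
  by rewrite -[X in _ < X]mul1n -ltn_divLR ?expq_gt0 // div0.
have [{}lt|tl] := ltnP l t; last first.
  have -> : l = t by lia.
  by rewrite /digitn (_ : m - 1 - t = m - t.+1) ?divn_small ?mod0n //; lia.
apply: (proj2 (IH (ltnW tm))) => //; apply: leq_trans jt _.
by rewrite leq_pexp2l; lia.
Qed.

Lemma digitn_prefix m t s j : (t < m) -> (s < q) -> (j < q ^ m) ->
  (forall l, (l < t) -> digitn m j l = 0) /\ (digitn m j t < q - s) <->
  (j < (q - s) * q ^ (m - t - 1)).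
Proof.
move=> tm sq jm; rewrite digitn_prefix0 ?(ltnW tm) // /digitn.
have -> : m - 1 - t = m - t - 1 by lia.
set e := m - t - 1; have -> : m - t = e.+1 by rewrite /e; lia.
rewrite expnS -!ltn_divLR ?expq_gt0 //.
split=> [[lt_q lt_qs]|lt_qs]; first by rewrite modn_small in lt_qs.
by rewrite modn_small; lia.
Qed.

End Digits.

Section MinDistance.
Local Open Scope nat_scope.
Variable q : nat.
Hypothesis q_gt1 : 1 < q.

Definition rm_min_dist (r m : nat) : nat :=
  if m * (q - 1) <= r then 1 else (q - r %% (q - 1)) * q ^ (m - r %/ (q - 1) - 1).

Lemma rm_min_distE m t s : s < q - 1 ->
  rm_min_dist (t * (q - 1) + s) m = if t < m then (q - s) * q ^ (m - t - 1) else 1.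
Proof.
move=> sq; have q1 : 0 < q - 1 by lia.
rewrite /rm_min_dist divnMDl // modnMDl divn_small // modn_small // addn0.
case: (ltnP t m) => tm; last by rewrite ifT //; nia.
by rewrite ifF //; apply/negbTE; rewrite -ltnNge; nia.
Qed.

Lemma rm_min_dist_gt0 r m : 0 < rm_min_dist r m.
Proof.
rewrite /rm_min_dist; case: ifP => // _; rewrite muln_gt0 expq_gt0 // andbT.
by have := @ltn_pmod r (q - 1); lia.
Qed.

(* Either r - E stays in the block of r (E <= s), or it borrows one (q - 1)-block. *)
Lemma rm_min_dist_step E r m : E < q -> E <= r ->
  rm_min_dist r m.+1 <= (q - E) * rm_min_dist (r - E) m.
Proof.
move=> Eq Er; have D0 := rm_min_dist_gt0 (r - E) m; have q1 : 0 < q - 1 by lia.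
have := ltn_pmod r q1; have := divn_eq r (q - 1).
move: (r %/ (q - 1)) (r %% (q - 1)) => t s r_eq sq; subst r.
rewrite rm_min_distE //; case: (ltnP t m.+1) => tm; last by rewrite muln_gt0 D0; lia.
have [Es|sE] := leqP E s.
  rewrite (_ : t * (q - 1) + s - E = t * (q - 1) + (s - E)); last by lia.
  rewrite rm_min_distE; last by lia.
  case: (ltnP t m) => tm'.
    rewrite (_ : m.+1 - t - 1 = (m - t - 1).+1); last by lia.
    rewrite expnS !mulnA leq_mul2r; apply/orP; right.
    have -> : q - (s - E) = q - s + E by lia.
    have -> : q - E = q - s + (s - E) by lia.
    have : q = q - s + E + (s - E) by lia.
    by move: (q - s) (s - E) => a d ->; nia.
  have -> : t = m by lia.
  by rewrite subSnn subnn !muln1; lia.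
have t0 : 0 < t by case: (posnP t) Er => // ->; lia.
rewrite (_ : t * (q - 1) + s - E = t.-1 * (q - 1) + (s + (q - 1) - E)); last first.
  by case: (t) t0 => // t' _; rewrite mulSn /=; move: (t' * _) => X; lia.
rewrite rm_min_distE; last by lia.
rewrite ifT; last by lia.
rewrite (_ : m - t.-1 - 1 = m.+1 - t - 1); last by lia.
rewrite mulnA leq_mul2r; apply/orP; right.
have -> : q - (s + (q - 1) - E) = (E - s).+1 by lia.
have -> : q - s = E - s + (q - E) by lia.
have : 0 < q - E by lia.
by move: (E - s) (q - E) => u v; nia.
Qed.

End MinDistance.

Section PolyFunctionSupport.
Variable F : finFieldType.
Local Notation q := #|F|.
Let q_gt1 : (1 < q)%N := card_finNzRing_gt1 F.

Lemma expf_card_sub1 (a : F) : a != 0 -> a ^+ (q - 1) = 1.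
Proof.
by move=> a0; apply: (mulfI a0); rewrite mulr1 -exprS subn1 prednK ?expf_card //; lia.
Qed.

(* k = 0 is kept apart since 0 ^+ 0 = 1 while 0 ^+ (q - 1) = 0. *)
Definition exp_reduce (k : nat) : nat := if k == 0%N then 0%N else (k.-1 %% (q - 1)).+1.

Lemma exp_reduce_lt k : (exp_reduce k < q)%N.
Proof. by rewrite /exp_reduce; case: eqP => _; [lia | have := @ltn_pmod k.-1 (q - 1); lia]. Qed.

Lemma exp_reduce_le k : (exp_reduce k <= k)%N.
Proof. by rewrite /exp_reduce; case: eqP => // k0; have := leq_mod k.-1 (q - 1); lia. Qed.

Lemma expr_reduce (a : F) k : a ^+ k = a ^+ exp_reduce k.
Proof.
rewrite /exp_reduce; case: eqP => [-> //|/eqP k0].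
have [->|a0] := eqVneq a 0; first by rewrite !expr0n (negbTE k0).
rewrite {1}(_ : k = (k.-1 %/ (q - 1)) * (q - 1) + (k.-1 %% (q - 1)).+1)%N; last first.
  by have := divn_eq k.-1 (q - 1); lia.
by rewrite exprD mulnC exprM expf_card_sub1 // expr1n mul1r.
Qed.

Definition mtail m (mon : 'X_{1..m.+1}) : 'X_{1..m} := [multinom mon (lift ord0 i) | i < m].

Lemma mdeg_mtail m (mon : 'X_{1..m.+1}) : mdeg mon = (mon ord0 + mdeg (mtail mon))%N.
Proof.
rewrite !mdegE big_ord_recl; congr (_ + _)%N.
by apply: eq_bigr => i _; rewrite mnmE.
Qed.

(* The coefficient of X_0 ^ e in p after reducing X_0 ^ k to X_0 ^ (exp_reduce k),
   which is the same function on F^(m+1). *)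
Definition mslice m (p : {mpoly F[m.+1]}) (e : nat) : {mpoly F[m]} :=
  \sum_(mon <- msupp p | exp_reduce (mon ord0) == e) p@_mon *: 'X_[mtail mon].

Lemma msize_mslice m r (p : {mpoly F[m.+1]}) e : (msize p <= r.+1)%N ->
  (msize (mslice p e) <= (r - e).+1)%N.
Proof.
move=> pr; apply: leq_trans (msize_sum _ _ _) _.
apply/bigmax_leqP_seq => mon mon_p /eqP <-.
apply: leq_trans (msizeZ_le _ _) _; rewrite msizeX ltnS.
by have := msize_mdeg_lt mon_p; rewrite mdeg_mtail; have := exp_reduce_le (mon ord0); lia.
Qed.

Lemma mslice_eq0 m (p : {mpoly F[m.+1]}) e : (q <= e)%N || (msize p <= e)%N -> mslice p e = 0.
Proof.
move=> /orP e_large; rewrite /mslice big1_seq // => mon /andP[/eqP mon_e /msize_mdeg_lt].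
by rewrite mdeg_mtail; have := exp_reduce_lt (mon ord0); have := exp_reduce_le (mon ord0); lia.
Qed.

Lemma meval_mslice m (p : {mpoly F[m.+1]}) (x : 'I_m.+1 -> F) :
  p.@[x] = \sum_(e < q) x ord0 ^+ e * (mslice p e).@[fun i => x (lift ord0 i)].
Proof.
pose cls (mon : 'X_{1..m.+1}) := Ordinal (exp_reduce_lt (mon ord0)).
rewrite mevalE (@partition_big _ _ _ _ _ _ xpredT cls xpredT) //=.
apply: eq_bigr => e _.
rewrite /mslice (big_morph _ (mevalD _) (meval0 _)) mulr_sumr.
apply: eq_big => [mon|mon /eqP <-]; first by rewrite -val_eqE.
rewrite mevalZ mevalX big_ord_recl mulrCA -expr_reduce; congr (_ * (_ * _)).
by apply: eq_bigr => i _; rewrite mnmE.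
Qed.

Definition fcons m (a : F) (y : {ffun 'I_m -> F}) : {ffun 'I_m.+1 -> F} :=
  [ffun i => if unlift ord0 i is Some j then y j else a].

Lemma fcons0 m a (y : {ffun 'I_m -> F}) : fcons a y ord0 = a.
Proof. by rewrite ffunE unlift_none. Qed.

Lemma fconsS m a (y : {ffun 'I_m -> F}) j : fcons a y (lift ord0 j) = y j.
Proof. by rewrite ffunE liftK. Qed.

Lemma fcons_inj m : injective (fun z : F * {ffun 'I_m -> F} => fcons z.1 z.2).
Proof.
move=> [a1 y1] [a2 y2] /= eq12; congr (_, _); first by rewrite -(fcons0 a1 y1) eq12 fcons0.
by apply/ffunP => j; rewrite -(fconsS a1 y1) eq12 fconsS.
Qed.

Definition msupport m (p : {mpoly F[m]}) : {set {ffun 'I_m -> F}} :=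
  [set x : {ffun 'I_m -> F} | p.@[x] != 0].

Lemma card_fcons_msupport m (p : {mpoly F[m.+1]}) E y :
  y \in msupport (mslice p E) -> (forall e, (E < e)%N -> (mslice p e).@[y] = 0) ->
  (q - E <= #|[set a | fcons a y \in msupport p]|)%N.
Proof.
rewrite inE => yE y_gt; pose P := \poly_(i < q) (mslice p i).@[y].
have PE a : P.[a] = p.@[fcons a y].
  rewrite horner_poly meval_mslice; apply: eq_bigr => e _.
  by rewrite fcons0 mulrC; congr (_ * _); apply: meval_eq => i; rewrite fconsS.
have Eq : (E < q)%N by rewrite ltnNge; apply: contraNN yE => qE; rewrite mslice_eq0 ?qE ?meval0.
have P0 : P != 0.
  apply: contraNneq yE => P0; have := coef_poly q (fun i => (mslice p i).@[y]) E.
  by rewrite -/P P0 coef0 Eq => <-.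
have sizeP : (size P <= E.+1)%N.
  by apply/leq_sizeP => j Ej; rewrite coef_poly; case: ifP => // _; apply: y_gt.
apply: leq_trans (_ : q - (size P).-1 <= _)%N; first by lia.
apply: leq_trans (card_nonroot_ge P0) _.
by apply: subset_leq_card; apply/subsetP => a; rewrite !inE /root PE.
Qed.

Lemma card_msupport_mslice m (p : {mpoly F[m.+1]}) E :
  (forall e (y : {ffun 'I_m -> F}), (E < e)%N -> (mslice p e).@[y] = 0) ->
  ((q - E) * #|msupport (mslice p E)| <= #|msupport p|)%N.
Proof.
move=> E_max; pose Z := [set z : F * {ffun 'I_m -> F} | fcons z.1 z.2 \in msupport p].
apply: leq_trans (_ : #|Z| <= _)%N; last first.
  rewrite -(card_imset _ (@fcons_inj m)); apply: subset_leq_card.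
  by apply/subsetP => _ /imsetP[z + ->]; rewrite inE.
rewrite (card_set_pair (fun a y => fcons a y \in msupport p)) mulnC -sum_nat_const.
rewrite big_mkcond /=.
apply: leq_sum => y _; case: ifP => // yE.
exact: card_fcons_msupport yE (fun e => E_max e y).
Qed.

Lemma rm_min_dist_le_card m r (p : {mpoly F[m]}) : (msize p <= r.+1)%N ->
  msupport p != set0 -> (rm_min_dist q r m <= #|msupport p|)%N.
Proof.
elim: m r p => [|m IH] r p pr p0; first by rewrite /rm_min_dist mul0n leq0n card_gt0.
pose nz (e : 'I_q) := msupport (mslice p e) != set0.
have [e0 nz_e0] : exists e0, nz e0.
  apply/existsP; apply: contraR p0 => /existsPn slices0; apply/eqP/setP => x.
  rewrite !inE meval_mslice big1 ?eqxx // => e _.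
  have := slices0 e; rewrite /nz negbK => /eqP/setP/(_ [ffun i => x (lift ord0 i)]).
  by rewrite !inE (meval_eq _ (ffunE _)) => /negbFE/eqP ->; rewrite mulr0.
have [E nz_E E_max] := arg_maxnP val nz_e0.
have E_gt e (y : {ffun 'I_m -> F}) : (E < e)%N -> (mslice p e).@[y] = 0.
  move=> Ee; have [eq|qe] := ltnP e q; last by rewrite mslice_eq0 ?qe ?meval0.
  apply/eqP; apply: contraTT Ee => ye; rewrite -leqNgt; apply: (E_max (Ordinal eq)).
  by apply/set0Pn; exists y; rewrite inE.
have Er : (E <= r)%N.
  rewrite leqNgt; apply: contraNN nz_E => rE; apply/eqP/setP => y.
  by rewrite mslice_eq0 ?inE ?meval0 ?eqxx //; apply/orP; right; apply: leq_trans pr rE.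
apply: leq_trans (rm_min_dist_step q_gt1 m (ltn_ord E) Er) _.
apply: leq_trans (card_msupport_mslice E_gt); rewrite leq_mul2l.
by rewrite IH ?orbT // msize_mslice.
Qed.

End PolyFunctionSupport.

Section ReedMullerCode.
Variables (F : finFieldType) (alpha : 'I_#|F| -> F).
Hypothesis alpha_inj : injective alpha.
Hypothesis alpha0 : forall i : 'I_#|F|, nat_of_ord i = 0%N -> alpha i = 0.
Local Notation q := #|F|.
Let q_gt1 : (1 < q)%N := card_finNzRing_gt1 F.

Definition rm_point m (j : 'I_(q ^ m)) : {ffun 'I_m -> F} := [ffun l => RMpoint alpha j l].

Lemma rm_point_bij m : bijective (@rm_point m).
Proof.
apply: inj_card_bij; last by rewrite card_ffun !card_ord.
move=> j j' eqj; apply/val_inj/(@digitn_inj q q_gt1 m); rewrite ?ltn_ord // => l lm.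
have := congr1 (fun x : {ffun 'I_m -> F} => x (Ordinal lm)) eqj.
by rewrite !ffunE => /alpha_inj/(congr1 val).
Qed.

Lemma w_b1_evalvec m (p : {mpoly F[m]}) : w_b 1 (evalvec alpha p) = #|msupport p|.
Proof.
have [pt_inv ptK ptVK] := @rm_point_bij m.
rewrite /w_b chi_b1 -(card_imset _ (can_inj ptK)); apply: eq_card => x.
rewrite inE; apply/imsetP/idP => [[j] | px].
  by rewrite !inE mxE => pj ->; rewrite (meval_eq _ (ffunE _)).
by exists (pt_inv x); rewrite ?ptVK // !inE mxE -(meval_eq _ (ffunE _)) -/(rm_point _) ptVK.
Qed.

Lemma inRMP r m c : reflect (inRM alpha r c) (c \in RM alpha r m).
Proof. by rewrite inE; apply: pboolP. Qed.

Lemma RM_span r m v : v \in <<enum (RM alpha r m)>>%VS -> v \in RM alpha r m.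
Proof.
move=> /coord_span ->; apply: (big_ind (fun c => c \in RM alpha r m)) => [|c1 c2|i _].
- by apply/inRMP; exists 0; rewrite msize0; split=> //; apply/rowP => j; rewrite !mxE meval0.
- move=> /inRMP[p1 [p1r ->]] /inRMP[p2 [p2r ->]]; apply/inRMP; exists (p1 + p2).
  rewrite (leq_trans (msizeD_le _ _)) ?geq_max ?p1r //.
  by split=> //; apply/rowP => j; rewrite !mxE mevalD.
set X := enum_tuple _; have /inRMP[p [pr ->]] : X`_i \in RM alpha r m.
  by rewrite -tnth_nth -mem_enum mem_tnth.
apply/inRMP; exists (coord X i v *: p).
by rewrite (leq_trans (msizeZ_le _ _)) //; split=> //; apply/rowP => j; rewrite !mxE mevalZ.
Qed.

Lemma RM_min_wt r m c : c \in RM alpha r m -> c != 0 -> (rm_min_dist q r m <= w_b 1 c)%N.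
Proof.
move=> /inRMP[p [pr ->]] c0; rewrite w_b1_evalvec; apply: rm_min_dist_le_card => //.
by rewrite -card_gt0 -w_b1_evalvec w_b1_gt0.
Qed.

(* Nonzero exactly where the first t coordinates vanish and the next one is not
   among alpha_(q-s), ..., alpha_(q-1): the first (q - s) q^(m-t-1) points. *)
Definition rm_min_word m t s : {mpoly F[m]} :=
  \prod_(l < m | (l < t)%N) (1 - 'X_l ^+ (q - 1)) *
  \prod_(l < m | val l == t) \prod_(i : 'I_q | (q - s <= i)%N) ('X_l - (alpha i)%:MP).

Lemma msize_rm_min_word m t s : (msize (rm_min_word m t s) <= (t * (q - 1) + s).+1)%N.
Proof.
apply: msizeM_leq.
  apply: leq_trans (msize_prod_leq _ (d := fun=> (q - 1)%N) (fun l _ => msize_1subX _ l _)) _.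
  rewrite ltnS sum_nat_const leq_mul2r; apply/orP; right.
  by rewrite (eq_card (B := [set l : 'I_m | l < t]%N)) ?card_ord_ltn // => l; rewrite inE.
have factor_size (l : 'I_m) :
    (msize (\prod_(i : 'I_q | (q - s <= i)%N) ('X_l - (alpha i)%:MP)) <= s.+1)%N.
  apply: leq_trans (msize_prod_leq _ (d := fun=> 1%N) (fun i _ => msize_linear l (alpha i))) _.
  rewrite ltnS sum_nat_const muln1.
  by rewrite (eq_card (B := [set i : 'I_q | q - s <= i]%N)) ?card_ord_geq // => i; rewrite inE.
apply: leq_trans (msize_prod_leq _ (d := fun=> s) (fun l _ => factor_size l)) _.
rewrite ltnS sum_nat_const -[X in (_ <= X)%N]mul1n leq_mul2r; apply/orP; right.
rewrite (eq_card (B := [set l : 'I_m | val l == t])) => [|l]; last by rewrite inE.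
apply: (@leq_card_seq _ _ [:: t]) => k /mapP[l].
by rewrite mem_enum inE => /eqP <- ->; rewrite mem_seq1.
Qed.

Lemma onesub_expf_card_neq0 (a : F) : (1 - a ^+ (q - 1) != 0) = (a == 0).
Proof.
have [->|a0] := eqVneq a 0; first by rewrite expr0n subn_eq0 leqNgt q_gt1 subr0 oner_neq0.
by rewrite expf_card_sub1 // subrr eqxx.
Qed.

Lemma rm_min_word_neq0P m t s (x : 'I_m -> F) :
  reflect ((forall l : 'I_m, (l < t)%N -> x l = 0) /\
           (forall l : 'I_m, val l = t -> forall i : 'I_q, (q - s <= i)%N -> x l != alpha i))
          ((rm_min_word m t s).@[x] != 0).
Proof.
have evalA l : (1 - 'X_l ^+ (q - 1) : {mpoly F[m]}).@[x] != 0 = (x l == 0).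
  by rewrite mevalB meval1 rmorphXn /= mevalXU onesub_expf_card_neq0.
have evalB (l : 'I_m) i : ('X_l - (alpha i)%:MP : {mpoly F[m]}).@[x] != 0 = (x l != alpha i).
  by rewrite mevalB mevalXU mevalC subr_eq0.
rewrite /rm_min_word mevalM mulf_eq0 negb_or !rmorph_prod.
apply: (iffP andP) => [[/prodf_neq0 A /prodf_neq0 B] | [A B]]; split.
- by move=> l lt; apply/eqP; rewrite -evalA A.
- move=> l /eqP lt i si; have := B l lt; rewrite rmorph_prod => /prodf_neq0/(_ i si).
  by rewrite evalB.
- by apply/prodf_neq0 => l lt; rewrite evalA A.
apply/prodf_neq0 => l /eqP lt; rewrite rmorph_prod; apply/prodf_neq0 => i si.
by rewrite evalB B.
Qed.

Lemma alpha_eq0 (d : 'I_q) : (alpha d == 0) = (val d == 0%N).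
Proof.
apply/eqP/eqP => [|d0]; last exact: alpha0.
by rewrite -(alpha0 (i := Ordinal (ltnW q_gt1))) // => /alpha_inj ->.
Qed.

Lemma rm_min_word_support m t s (j : 'I_(q ^ m)) :
  (t <= m)%N -> (s < q - 1)%N -> (t = m -> s = 0%N) ->
  (rm_min_word m t s).@[RMpoint alpha j] != 0 <-> (j < rm_min_dist q (t * (q - 1) + s) m)%N.
Proof.
move=> tm sq ts; rewrite rm_min_distE // -(rwP (rm_min_word_neq0P _ _ _)).
have leading0 : (forall l : 'I_m, (l < t)%N -> RMpoint alpha j l = 0) <->
    (forall l, (l < t)%N -> digitn q m j l = 0%N).
  split=> dig0 l lt.
    by have /eqP := dig0 (Ordinal (leq_trans lt tm)) lt; rewrite alpha_eq0 => /eqP.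
  by apply/eqP; rewrite alpha_eq0; apply/eqP; exact: dig0.
rewrite leading0; case: (ltnP t m) => tm'; last first.
  have tm_eq : t = m by lia.
  have := digitn_prefix0 q_gt1 (leqnn m) (ltn_ord j); rewrite subnn expn0 => <-.
  by rewrite (ts tm_eq) tm_eq; split=> [[] //|dig0]; split=> // l /= lm; have := ltn_ord l; lia.
have digit_t : (forall l : 'I_m, val l = t -> forall i : 'I_q, (q - s <= i)%N ->
    RMpoint alpha j l != alpha i) <-> (digitn q m j t < q - s)%N.
  split=> [B | lt_qs l /= lt i si].
    rewrite ltnNge; apply/negP => si.
    by have := B (Ordinal tm') erefl (digit F j (Ordinal tm')) si; rewrite eqxx.
  by apply: contraTneq si => /alpha_inj <-; rewrite -ltnNge /digit /= lt.
by rewrite digit_t (digitn_prefix q_gt1 tm' _ (ltn_ord j)) //; lia.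
Qed.

Lemma rm_min_word_in_RM m t s :
  evalvec alpha (rm_min_word m t s) \in RM alpha (t * (q - 1) + s) m.
Proof. by apply/inRMP; exists (rm_min_word m t s); rewrite msize_rm_min_word. Qed.

End ReedMullerCode.

Lemma rm_min_dist_ratE (q m t s b : nat) : (1 < q)%N -> (t <= m)%N -> (s < q - 1)%N ->
  (t = m -> s = 0%N) ->
  ((q ^ m)%:R - (q - s)%:R * (q%:R) ^ (m%:Z - t%:Z - 1) + 1 <= (b%:R : rat)) <->
  (q ^ m < b + rm_min_dist q (t * (q - 1) + s) m)%N.
Proof.
move=> q_gt1 tm sq ts; rewrite rm_min_distE //; case: (ltnP t m) => tm'.
  have -> : m%:Z - t%:Z - 1 = (m - t - 1)%N by rewrite !subzn //; lia.
  have Dq : ((q - s) * q ^ (m - t - 1) <= q ^ m)%N.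
    apply: leq_trans (_ : (q * q ^ (m - t - 1) <= _)%N); first by rewrite leq_mul2r leq_subr orbT.
    by rewrite -expnS leq_pexp2l; lia.
  rewrite -exprnP -natrX -natrM -natrB // natr1 ler_nat.
  by move: Dq; move: (_ * _)%N (q ^ m)%N => D n; lia.
have tm_eq : t = m by lia.
rewrite (ts tm_eq) tm_eq subrr sub0r exprN1 subn0 mulfV ?pnatr_eq0 -?lt0n; last by lia.
by rewrite subrK ler_nat; lia.
Qed.

Theorem mainTheorem10 (F : finFieldType) (alpha : 'I_#|F| -> F) (m r t s b : nat) :
  injective alpha ->
  (forall i : 'I_#|F|, nat_of_ord i = 0%N -> alpha i = 0) ->
  (1 <= m)%N ->
  (r <= m * (#|F| - 1))%N ->
  r = (t * (#|F| - 1) + s)%N ->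
  (s < #|F| - 1)%N ->
  (1 <= b <= #|F| ^ m)%N ->
  (bsymbol_MDS b (RM alpha r m) <->
   ((#|F| ^ m)%:R - (#|F| - s)%:R * (#|F|%:R) ^ (m%:Z - t%:Z - 1) + 1 <= (b%:R : rat)
    \/ bsymbol_MDS 1 (RM alpha r m))).
Proof.
move=> alpha_inj alpha0 _ r_le r_eq s_lt /andP[b_gt0 _].
have q_gt1 := card_finNzRing_gt1 F.
have t_le : (t <= m)%N by move: r_le; rewrite r_eq; nia.
have t_max : t = m -> s = 0%N by move=> tm; move: r_le; rewrite r_eq tm; lia.
pose c0 := evalvec alpha (rm_min_word alpha m t s).
have c0_supp j : c0 0 j != 0 <-> (j < rm_min_dist #|F| r m)%N.
  by rewrite mxE r_eq; apply: rm_min_word_support.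
rewrite rm_min_dist_ratE // -r_eq.
apply: (@bsymbol_MDS_iff _ _ _ (@RM_span _ alpha r m) _ c0) => //.
- exact: RM_min_wt.
- by rewrite r_eq rm_min_word_in_RM.
- apply/row_neq0P; exists (Ordinal (expq_gt0 q_gt1 m)).
  by apply/c0_supp; exact: rm_min_dist_gt0.
- by move=> j Dj; apply/eqP; apply: contraTT Dj => /c0_supp; rewrite -ltnNge.
Qed.
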